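(* Under the standing assumptions (A1)–(A4) below, for every $A\in\mathbb{R}^{k\times d}$ with rows $a_1,\dots,a_k$, $$L_4(A)=\sum_{m\in[k]}\mathbb{E}[p_m^\ast(x)]\sum_{i\ne j}\langle a_m^\ast,a_i\rangle^2\langle a_m^\ast,a_j\rangle^2-\mu\sum_{m,i\in[k]}\mathbb{E}[p_m^\ast(x)]\langle a_m^\ast,a_i\rangle^4+\lambda\sum_{i\in[k]}\Big(\sum_{m\in[k]}\mathbb{E}[p_m^\ast(x)]\langle a_m^\ast,a_i\rangle^2-1\Big)^2+\frac{\delta}{2}\|A\|_F^2.$$
   Context: Mixture-of-experts model: $k\ge2$, $d$; input $x\in\mathbb{R}^d$; regressors $a_1^\ast,\dots,a_k^\ast$; gating parameters $w_1^\ast,\dots,w_{k-1}^\ast$, $w_k^\ast=0$; activation $g:\mathbb{R}\to\mathbb{R}$; noise $\sigma>0$. Output $y=\sum_iz_ig(\langle a_i^\ast,x\rangle)+\xi$, $\xi\sim\mathcal N(0,\sigma^2)$ independent of $x$, $z$ one-hot with $\Pr(z_i=1|x)=p_i^\ast(x):=e^{\langle w_i^\ast,x\rangle}/\sum_je^{\langle w_j^\ast,x\rangle}$. Valid non-linearity: with $Z\sim\mathcal N(0,1)$, $Y|Z\sim\mathcal N(g(Z),\sigma^2)$, $\mathcal Q_4(y)=y^4+\alpha y^3+\beta y^2+\gamma y$, $\mathcal Q_2(y)=y^2+\delta'y$, $h_4(Z)=\mathbb{E}[\mathcal Q_4(Y)|Z]$, $h_2(Z)=\mathbb{E}[\mathcal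 Q_2(Y)|Z]$: $g$ is valid if for some $(\alpha,\beta,\gamma,\delta')$, $\mathbb{E}[h_4Z]=\mathbb{E}[h_4(Z^2-1)]=\mathbb{E}[h_4(Z^3-3Z)]=0\ne\mathbb{E}[h_4(Z^4-6Z^2+3)]$ and $\mathbb{E}[h_2Z]=0\ne\mathbb{E}[h_2(Z^2-1)]$; $\mathcal Q_4,\mathcal Q_2$ use this tuple. Standing assumptions: (A1) $x\sim\mathcal N(0,I_d)$; (A2) $\|a_i^\ast\|=1$, $\|w_i^\ast\|\le R$; (A3) $a_i^\ast$ linearly independent, $w_i^\ast$ orthogonal to their span, $2k-1<d$; (A4) $g$ valid. Let $c_{g,\sigma},c'_{g,\sigma}$ be the nonzero constants with $\mathbb{E}[\mathcal Q_4(y)\mathcal S_4(x)]=c_{g,\sigma}\sum_i\mathbb{E}[p_i^\ast(x)](a_i^\ast)^{\otimes4}$ and $\mathbb{E}[\mathcal Q_2(y)\mathcal S_2(x)]=c'_{g,\sigma}\sum_i\mathbb{E}[p_i^\ast(x)](a_i^\ast)^{\otimes2}$, where $\mathcal S_m(x)=\nabla_x^mf(x)/f(x)$, $f$ the standard Gaussian density. Define $t_3(u,x)=((u^\top x)^2-\|u\|^2)/c'_{g,\sigma}$, $t_2(u,x)=((u^\top x)^4-6\|u\|^2(u^\top x)^2+3\|u\|^4)/c_{g,\sigma}$, $t_1(u,v,x)=((u^\top x)^2(v^\top x)^2-\|u\|^2(v^\top x)^2-4(u^\top x)(v^\top x)(u^\top v)-\|v\|^2(u^\top x)^2+\|u\|^2\|v\|^2+2(u^\top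 v)^2)/c_{g,\sigma}$, and for constants $\mu,\lambda,\delta>0$: $L_4(A)=\sum_{i\ne j}\mathbb{E}[\mathcal Q_4(y)t_1(a_i,a_j,x)]-\mu\sum_i\mathbb{E}[\mathcal Q_4(y)t_2(a_i,x)]+\lambda\sum_i(\mathbb{E}[\mathcal Q_2(y)t_3(a_i,x)]-1)^2+\frac{\delta}{2}\|A\|_F^2$. *)

From HB Require Import structures.
From mathcomp Require Import all_boot all_order all_algebra.
From mathcomp Require Import all_classical all_reals all_analysis.
Set Implicit Arguments. Unset Strict Implicit. Unset Printing Implicit Defensive.
Import Order.TTheory GRing.Theory Num.Theory.
Import numFieldNormedType.Exports.
Local Open Scope classical_set_scope.
Local Open Scope ring_scope.

Section MoE.
Variable R : realType.

Definition dotv (d : nat) (u v : 'rV[R]_d) : R := \sum_(j < d) u 0 j * v 0 j.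
Definition sqnorm (d : nat) (u : 'rV[R]_d) : R := dotv u u.

Definition frob2 (k d : nat) (A : 'M[R]_(k, d)) : R :=
  \sum_(i < k) \sum_(j < d) A i j ^+ 2.

Definition softmax (k d : nat) (w : 'I_k -> 'rV[R]_d) (i : 'I_k) (x : 'rV[R]_d) : R :=
  expR (dotv (w i) x) / \sum_(j < k) expR (dotv (w j) x).

Definition Q4 (alpha beta gamma y : R) : R :=
  y ^+ 4 + alpha * y ^+ 3 + beta * y ^+ 2 + gamma * y.
Definition Q2 (delta' y : R) : R := y ^+ 2 + delta' * y.

(* h(z) = E[Q(Y) | Z = z] where Y | Z=z ~ N(g z, sigma^2)
   (normal_prob m s is the normal law with mean m and standard deviation s) *)
Definition hcond (Q : R -> R) (g : R -> R) (sigma z : R) : \bar R :=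
  (\int[normal_prob (g z) sigma]_y (Q y)%:E)%E.

Definition Egauss (h : R -> \bar R) (q : R -> R) : \bar R :=
  (\int[normal_prob (0 : R) 1]_z (h z * (q z)%:E))%E.

Definition valid_with (g : R -> R) (sigma alpha beta gamma delta' : R) : Prop :=
  let h4 := hcond (Q4 alpha beta gamma) g sigma in
  let h2 := hcond (Q2 delta') g sigma in
  [/\ Egauss h4 (fun z => z) = 0%E /\
      Egauss h4 (fun z => z ^+ 2 - 1) = 0%E,
      Egauss h4 (fun z => z ^+ 3 - 3 * z) = 0%E,
      Egauss h4 (fun z => z ^+ 4 - 6 * z ^+ 2 + 3) != 0%E,
      Egauss h2 (fun z => z) = 0%E &
      Egauss h2 (fun z => z ^+ 2 - 1) != 0%E].

Definition valid (g : R -> R) (sigma : R) : Prop :=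
  exists alpha beta gamma delta', valid_with g sigma alpha beta gamma delta'.

Definition gauss_density (d : nat) (x : 'rV[R]_d) : R :=
  (Num.sqrt (pi *+ 2))^-1 ^+ d * expR (- (sqnorm x / 2)).

Fixpoint dders (d : nat) (l : seq 'rV[R]_d) (f : 'rV[R]_d -> R) : 'rV[R]_d -> R :=
  match l with
  | [::] => f
  | v :: l' => fun x => derive (dders l' f) x v
  end.

Definition evec (d : nat) (j : 'I_d) : 'rV[R]_d := delta_mx 0 j.

(* component (j_1,...,j_m) of the score tensor S_m(x) = nabla^m f(x) / f(x) *)
Definition score (d : nat) (J : seq 'I_d) (x : 'rV[R]_d) : R :=
  dders [seq evec j | j <- J] (@gauss_density d) x / gauss_density x.

(* The mixture-of-experts data model on a probability space (Omega, P):
   X : Omega -> R^d the input, Zc : Omega -> 'I_k the index of the active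
   expert (z = e_{Zc}), xi the noise.  The joint law is pinned down on
   measurable rectangles:  x ~ N(0, I_d);  Pr(Zc = i | x) = p_i^*(x);
   xi ~ N(0, sigma^2) independent of (x, z). *)
Definition moe_model (k d : nat) (dO : measure_display) (Omega : measurableType dO)
  (P : probability Omega R) (X : Omega -> 'rV[R]_d) (Zc : Omega -> 'I_k)
  (xi : Omega -> R) (wstar : 'I_k -> 'rV[R]_d) (sigma : R) : Prop :=
  [/\ (forall j : 'I_d, measurable_fun setT (fun w => X w ord0 j)),
      (forall i : 'I_k, measurable (Zc @^-1` [set i])),
      measurable_fun setT xi,
      (forall B : 'I_d -> set R, (forall j, measurable (B j)) ->
         P [set w | forall j : 'I_d, B j (X w ord0 j)]
         = (\prod_(j < d) normal_prob (0 : R) 1 (B j))%E) &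
      (forall (B : 'I_d -> set R) (C : set R) (i : 'I_k),
         (forall j, measurable (B j)) -> measurable C ->
         P [set w | (forall j : 'I_d, B j (X w ord0 j)) /\ Zc w = i /\ C (xi w)]
         = (\int[P]_(w in [set w | forall j : 'I_d, B j (X w ord0 j)])
               (softmax wstar i (X w))%:E * normal_prob (0 : R) sigma C)%E)].

Definition moe_y (k d : nat) (Omega : Type) (X : Omega -> 'rV[R]_d) (Zc : Omega -> 'I_k)
  (xi : Omega -> R) (astar : 'I_k -> 'rV[R]_d) (g : R -> R) (w : Omega) : R :=
  \sum_(i < k) (Zc w == i)%:R * g (dotv (astar i) (X w)) + xi w.

Definition Ex (dO : measure_display) (Omega : measurableType dO)
  (P : probability Omega R) (F : Omega -> R) : R :=
  fine (\int[P]_w (F w)%:E)%E.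

Definition t3 (c' : R) (d : nat) (u x : 'rV[R]_d) : R :=
  (dotv u x ^+ 2 - sqnorm u) / c'.
Definition t2 (c : R) (d : nat) (u x : 'rV[R]_d) : R :=
  (dotv u x ^+ 4 - 6 * sqnorm u * dotv u x ^+ 2 + 3 * sqnorm u ^+ 2) / c.
Definition t1 (c : R) (d : nat) (u v x : 'rV[R]_d) : R :=
  (dotv u x ^+ 2 * dotv v x ^+ 2 - sqnorm u * dotv v x ^+ 2
   - 4 * dotv u x * dotv v x * dotv u v - sqnorm v * dotv u x ^+ 2
   + sqnorm u * sqnorm v + 2 * dotv u v ^+ 2) / c.

Definition L4 (k d : nat) (dO : measure_display) (Omega : measurableType dO)
  (P : probability Omega R) (X : Omega -> 'rV[R]_d) (Zc : Omega -> 'I_k)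
  (xi : Omega -> R) (astar : 'I_k -> 'rV[R]_d) (g : R -> R)
  (alpha beta gamma delta' c c' mu lambda delta : R) (A : 'M[R]_(k, d)) : R :=
  let y := moe_y X Zc xi astar g in
  \sum_(i < k) \sum_(j < k | j != i)
     Ex P (fun w => Q4 alpha beta gamma (y w) * t1 c (row i A) (row j A) (X w))
  - mu * \sum_(i < k) Ex P (fun w => Q4 alpha beta gamma (y w) * t2 c (row i A) (X w))
  + lambda * \sum_(i < k)
       (Ex P (fun w => Q2 delta' (y w) * t3 c' (row i A) (X w)) - 1) ^+ 2
  + delta / 2 * frob2 A.

End MoE.

(* The score tensors S_m(x) = D^m f(x) / f(x) of the standard Gaussian density
   are the Hermite tensors: S_2(x)[p,q] = <p,x><q,x> - <p,q>, and S_4(x) is the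
   quartic analogue [score_form4].  The test functions are contractions of them,
   t_1(u,v,x) = S_4(x)[u,v,v,u] / c, t_2(u,x) = S_4(x)[u,u,u,u] / c and
   t_3(u,x) = S_2(x)[u,u] / c', so contracting the identities that define c and
   c' against u and v, by multilinearity and linearity of expectation, yields
   E[Q_4(y) t_1(u,v,x)] = sum_m E[p_m] <a_m,u>^2 <a_m,v>^2,
   E[Q_4(y) t_2(u,x)] = sum_m E[p_m] <a_m,u>^4 and
   E[Q_2(y) t_3(u,x)] = sum_m E[p_m] <a_m,u>^2; substituting these into L_4
   gives the formula. *)

From HB Require Import structures.
From mathcomp Require Import all_boot all_order all_algebra.
From mathcomp Require Import all_classical all_reals all_analysis.
From mathcomp Require Import ring measurable_realfun.
Import Order.TTheory GRing.Theory Num.Theory.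
Import numFieldNormedType.Exports.
Local Open Scope classical_set_scope.
Local Open Scope ring_scope.

Set Implicit Arguments. Unset Strict Implicit. Unset Printing Implicit Defensive.

Section DotProduct.
Variables (R : realType) (d : nat).
Implicit Types (u v w x : 'rV[R]_d).

Lemma dotvC u v : dotv u v = dotv v u.
Proof. by apply: eq_bigr => j _; rewrite mulrC. Qed.

Lemma dotvDr u v w : dotv u (v + w) = dotv u v + dotv u w.
Proof. by rewrite /dotv -big_split; apply: eq_bigr => j _; rewrite mxE mulrDr. Qed.

Lemma dotvZr u (a : R) v : dotv u (a *: v) = a * dotv u v.
Proof. by rewrite /dotv mulr_sumr; apply: eq_bigr => j _; rewrite mxE mulrCA. Qed.

Lemma dotvDl u v w : dotv (u + v) w = dotv u w + dotv v w.
Proof. by rewrite dotvC dotvDr !(dotvC w). Qed.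

Lemma dotvZl (a : R) u v : dotv (a *: u) v = a * dotv u v.
Proof. by rewrite dotvC dotvZr dotvC. Qed.

Lemma dotv0r u : dotv u 0 = 0.
Proof. by rewrite /dotv big1 // => j _; rewrite mxE mulr0. Qed.

Lemma dotv_sumr (I : Type) (r : seq I) (P : pred I) (F : I -> 'rV[R]_d) u :
  dotv u (\sum_(i <- r | P i) F i) = \sum_(i <- r | P i) dotv u (F i).
Proof. exact: (big_morph _ (dotvDr u) (dotv0r u)). Qed.

Lemma dotv_evecl j x : dotv (evec R j) x = x 0 j.
Proof.
rewrite /dotv (bigD1 j) //= big1 ?addr0 => [|i /negPf ij].
  by rewrite /evec mxE !eqxx mul1r.
by rewrite /evec mxE ij andbF mul0r.
Qed.

Lemma sqnorm_line v x (t : R) :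
  sqnorm (t *: v + x) = t * t * sqnorm v + 2 * t * dotv v x + sqnorm x.
Proof.
by rewrite /sqnorm !(dotvDl, dotvDr, dotvZl, dotvZr) (dotvC x v); ring.
Qed.

End DotProduct.

Section GaussianScore.
Variables (R : realType) (d : nat).
Implicit Types (p q r s v x y : 'rV[R]_d).
Local Notation gd := (@gauss_density R d).

Lemma is_derive_line (f : 'rV[R]_d -> R) x v (df : R) :
  is_derive (0 : R) 1 (fun t : R => f (t *: v + x)) df -> is_derive x v f df.
Proof.
case=> f_derivable f_derive; apply: DeriveDef; first exact/derivable1P.
rewrite -f_derive /derive /=.
set quot := (fun h : R => _); set quot1 := (fun h : R => _).
suff -> : quot = quot1 by [].
by apply/funext => h; rewrite /quot /quot1 /= addr0 scale0r add0r [_%:A]mulr1.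
Qed.

Lemma is_derive_affine (a b : R) : is_derive (0 : R) 1 (fun t : R => a * t + b) a.
Proof.
apply: is_derive_eq
  (is_deriveD (is_deriveZ a (is_derive_id (0 : R) 1)) (is_derive_cst b (0 : R) 1)) _.
by rewrite addr0 /GRing.scale /= mulr1.
Qed.

Lemma is_derive_dotv p x v : is_derive x v (dotv p) (dotv p v).
Proof.
apply: is_derive_line; rewrite (_ : (fun t => _) = fun t => dotv p v * t + dotv p x).
  exact: is_derive_affine.
by apply/funext => t; rewrite dotvDr dotvZr mulrC.
Qed.

Lemma is_derive_gauss_density x v : is_derive x v gd (- dotv v x * gd x).
Proof.
apply: is_derive_line.
pose K : R := (Num.sqrt (pi *+ 2))^-1 ^+ d.
pose q t : R := - (sqnorm v / 2) * (t * t) + - dotv v x * t + - (sqnorm x / 2).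
have id0 := is_derive_id (0 : R) 1.
have dq : is_derive (0 : R) 1 q (- dotv v x).
  apply: is_derive_eq (is_deriveD (is_deriveD (is_deriveZ _ (is_deriveM id0 id0))
    (is_deriveZ _ id0)) (is_derive_cst _ (0 : R) 1)) _.
  by rewrite /GRing.scale /=; ring.
have dexpq := is_deriveZ K (is_derive1_comp (is_derive_expR (q 0)) dq).
rewrite (_ : (fun t => _) = fun t => K * expR (q t)).
  apply: (is_derive_eq dexpq).
  have -> : q 0 = - (sqnorm x / 2) by rewrite /q; ring.
  by rewrite /gauss_density -/K /GRing.scale /=; ring.
apply/funext => t; rewrite /gauss_density sqnorm_line /q; congr (_ * expR _).
by field.
Qed.

Lemma derive_mul_gauss_density (f : 'rV[R]_d -> R) x v (df : R) :
  is_derive x v f df ->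
  'D_v (fun y => f y * gd y) x = (df - dotv v x * f x) * gd x.
Proof.
move=> f_derive.
have [_ fgd_derive] := is_deriveM f_derive (is_derive_gauss_density x v).
rewrite (_ : (fun y => f y * gd y) = f * gd) // fgd_derive.
by rewrite /GRing.scale /=; ring.
Qed.

Definition score_form1 p y := - dotv p y.
Definition score_form2 p q y := dotv p y * dotv q y - dotv p q.
Definition score_form3 p q r y :=
  - (dotv p y * dotv q y * dotv r y)
  + dotv p q * dotv r y + dotv p r * dotv q y + dotv q r * dotv p y.
Definition score_form4 p q r s y :=
  dotv p y * dotv q y * dotv r y * dotv s y
  - (dotv p q * dotv r y * dotv s y + dotv p r * dotv q y * dotv s y
     + dotv p s * dotv q y * dotv r y + dotv q r * dotv p y * dotv s y
     + dotv q s * dotv p y * dotv r y + dotv r s * dotv p y * dotv q y)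
  + dotv p q * dotv r s + dotv p r * dotv q s + dotv p s * dotv q r.

Lemma is_derive_score_form1 p x v : is_derive x v (score_form1 p) (- dotv p v).
Proof. exact: is_deriveN (is_derive_dotv p x v). Qed.

Lemma is_derive_score_form2 p q x v :
  is_derive x v (score_form2 p q) (dotv p x * dotv q v + dotv q x * dotv p v).
Proof.
apply: (is_derive_eq (is_deriveB (is_deriveM (is_derive_dotv p x v) (is_derive_dotv q x v))
                                 (is_derive_cst (dotv p q) x v))).
by rewrite /GRing.scale /=; ring.
Qed.

Lemma is_derive_score_form3 p q r x v :
  is_derive x v (score_form3 p q r)
   (- (dotv p x * dotv q x * dotv r v
       + dotv r x * (dotv p x * dotv q v + dotv q x * dotv p v))
    + dotv p q * dotv r v + dotv p r * dotv q v + dotv q r * dotv p v).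
Proof.
have Dp := is_derive_dotv p x v; have Dq := is_derive_dotv q x v.
have Dr := is_derive_dotv r x v.
exact: (is_derive_eq (is_deriveD (is_deriveD (is_deriveD
  (is_deriveN (is_deriveM (is_deriveM Dp Dq) Dr))
  (is_deriveZ (dotv p q) Dr)) (is_deriveZ (dotv p r) Dq)) (is_deriveZ (dotv q r) Dp))).
Qed.

Lemma dders_gauss_density1 v : dders [:: v] gd = fun y => score_form1 v y * gd y.
Proof.
apply/funext => y /=; have [_ ->] := is_derive_gauss_density y v.
by rewrite mulNr.
Qed.

Lemma dders_gauss_density2 v w :
  dders [:: v; w] gd = fun y => score_form2 v w y * gd y.
Proof.
apply/funext => y; rewrite -[LHS]/('D_v (dders [:: w] gd) y) dders_gauss_density1.
rewrite (derive_mul_gauss_density (is_derive_score_form1 w y v)).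
by rewrite /score_form1 /score_form2 (dotvC w v); ring.
Qed.

Lemma dders_gauss_density3 v w r :
  dders [:: v; w; r] gd = fun y => score_form3 v w r y * gd y.
Proof.
apply/funext => y; rewrite -[LHS]/('D_v (dders [:: w; r] gd) y) dders_gauss_density2.
rewrite (derive_mul_gauss_density (is_derive_score_form2 w r y v)).
by rewrite /score_form2 /score_form3 (dotvC w v) (dotvC r v); ring.
Qed.

Lemma dders_gauss_density4 v w r s :
  dders [:: v; w; r; s] gd = fun y => score_form4 v w r s y * gd y.
Proof.
apply/funext => y.
rewrite -[LHS]/('D_v (dders [:: w; r; s] gd) y) dders_gauss_density3.
rewrite (derive_mul_gauss_density (is_derive_score_form3 w r s y v)).
by rewrite /score_form3 /score_form4 (dotvC w v) (dotvC r v) (dotvC s v); ring.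
Qed.

Lemma gauss_density_gt0 y : 0 < gd y.
Proof.
rewrite /gauss_density mulr_gt0 ?expR_gt0 // exprn_gt0 // invr_gt0 sqrtr_gt0.
by rewrite mulrn_wgt0 // pi_gt0.
Qed.

Local Notation e := (evec R).

Lemma score2E a b y : score [:: a; b] y = score_form2 (e a) (e b) y.
Proof.
rewrite /score -[dders _ _]/(dders [:: e a; e b] gd) dders_gauss_density2.
by rewrite mulfK // gt_eqF // gauss_density_gt0.
Qed.

Lemma score4E a b c f y :
  score [:: a; b; c; f] y = score_form4 (e a) (e b) (e c) (e f) y.
Proof.
rewrite /score -[dders _ _]/(dders [:: e a; e b; e c; e f] gd) dders_gauss_density4.
by rewrite mulfK // gt_eqF // gauss_density_gt0.
Qed.

End GaussianScore.

Section Contraction.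
Variables (R : realType) (d : nat).
Implicit Types (p q r s u v y W : 'rV[R]_d).
Local Notation e := (evec R).

Definition dot_functional (f : 'rV[R]_d -> R) := exists W, forall s, f s = dotv s W.

Lemma dot_functional_expand (f : 'rV[R]_d -> R) v :
  dot_functional f -> \sum_(j < d) v 0 j * f (e j) = f v.
Proof.
by case=> W fW; rewrite fW; apply: eq_bigr => j _; rewrite fW dotv_evecl.
Qed.

Definition contract4 u v (G : 'I_d -> 'I_d -> 'I_d -> 'I_d -> R) :=
  \sum_(a < d) u 0 a * \sum_(b < d) u 0 b * \sum_(c < d) v 0 c *
    \sum_(f < d) v 0 f * G a b c f.

Definition contract2 u (G : 'I_d -> 'I_d -> R) :=
  \sum_(a < d) u 0 a * \sum_(b < d) u 0 b * G a b.

(* Expanding the last argument and rotating the arguments cyclically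
   consumes v, v, u, u in turn. *)
Lemma contract4_evec (F : 'rV[R]_d -> 'rV[R]_d -> 'rV[R]_d -> 'rV[R]_d -> R) u v :
  (forall p q r, dot_functional (F p q r)) ->
  (forall p q r s, F p q r s = F s p q r) ->
  contract4 u v (fun a b c f => F (e a) (e b) (e c) (e f)) = F u v v u.
Proof.
move=> F_lin F_cyc.
have expand p q r s : \sum_(j < d) s 0 j * F p q r (e j) = F s p q r.
  by rewrite dot_functional_expand // F_cyc.
rewrite /contract4.
under eq_bigr => a _ do under eq_bigr => b _ do under eq_bigr => c _ do rewrite expand.
under eq_bigr => a _ do under eq_bigr => b _ do rewrite expand.
by under eq_bigr => a _ do rewrite expand; rewrite expand.
Qed.

Lemma contract2_evec (F : 'rV[R]_d -> 'rV[R]_d -> R) u :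
  (forall p, dot_functional (F p)) -> (forall p s, F p s = F s p) ->
  contract2 u (fun a b => F (e a) (e b)) = F u u.
Proof.
move=> F_lin F_sym.
have expand p s : \sum_(j < d) s 0 j * F p (e j) = F s p.
  by rewrite dot_functional_expand // F_sym.
by rewrite /contract2; under eq_bigr => a _ do rewrite expand; rewrite expand.
Qed.

Lemma contract4_mull (k : R) u v G :
  k * contract4 u v G = contract4 u v (fun a b c f => k * G a b c f).
Proof.
rewrite /contract4 mulr_sumr; apply: eq_bigr => a _; rewrite mulrCA mulr_sumr; congr (_ * _).
apply: eq_bigr => b _; rewrite mulrCA mulr_sumr; congr (_ * _).
apply: eq_bigr => c _; rewrite mulrCA mulr_sumr; congr (_ * _).
by apply: eq_bigr => f _; rewrite mulrCA.
Qed.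

Lemma contract2_mull (k : R) u G :
  k * contract2 u G = contract2 u (fun a b => k * G a b).
Proof.
rewrite /contract2 mulr_sumr; apply: eq_bigr => a _; rewrite mulrCA mulr_sumr; congr (_ * _).
by apply: eq_bigr => b _; rewrite mulrCA.
Qed.

Lemma score_form4_dot_functional p q r y :
  dot_functional (fun s => score_form4 p q r s y).
Proof.
exists ((dotv p y * dotv q y * dotv r y
         - (dotv p q * dotv r y + dotv p r * dotv q y + dotv q r * dotv p y)) *: y
        + (dotv q r - dotv q y * dotv r y) *: p
        + (dotv p r - dotv p y * dotv r y) *: q
        + (dotv p q - dotv p y * dotv q y) *: r) => s.
rewrite !(dotvDr, dotvZr) /score_form4 (dotvC s p) (dotvC s q) (dotvC s r) (dotvC s y).
ring.
Qed.

Lemma score_form4_cyclic p q r s y : score_form4 p q r s y = score_form4 s p q r y.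
Proof. by rewrite /score_form4 (dotvC s p) (dotvC s q) (dotvC s r); ring. Qed.

Lemma score_form2_dot_functional p y : dot_functional (fun s => score_form2 p s y).
Proof.
exists (dotv p y *: y + (-1) *: p) => s.
by rewrite !(dotvDr, dotvZr) /score_form2 (dotvC s p) (dotvC s y); ring.
Qed.

Lemma score_form2C p s y : score_form2 p s y = score_form2 s p y.
Proof. by rewrite /score_form2 (dotvC s p) mulrC. Qed.

Lemma t1_score_form4 (c : R) u v y : t1 c u v y = c^-1 * score_form4 u v v u y.
Proof. by rewrite /t1 /score_form4 /sqnorm (dotvC v u) mulrC; congr (_ * _); ring. Qed.

Lemma t2_t1 (c : R) u y : t2 c u y = t1 c u u y.
Proof. by rewrite /t2 /t1 /sqnorm; congr (_ / _); ring. Qed.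

Lemma t3_score_form2 (c : R) u y : t3 c u y = c^-1 * score_form2 u u y.
Proof. by rewrite /t3 /score_form2 /sqnorm mulrC expr2. Qed.

Section Moments.
Variables (k : nat) (E : 'I_k -> R) (As : 'I_k -> 'rV[R]_d).

Definition moment4 p q r s :=
  \sum_(i < k) E i * (dotv (As i) p * dotv (As i) q * dotv (As i) r * dotv (As i) s).

Definition moment2 p q := \sum_(i < k) E i * (dotv (As i) p * dotv (As i) q).

Lemma moment4_dot_functional p q r : dot_functional (moment4 p q r).
Proof.
exists (\sum_(i < k) (E i * (dotv (As i) p * dotv (As i) q * dotv (As i) r)) *: As i) => s.
by rewrite dotv_sumr; apply: eq_bigr => i _; rewrite dotvZr (dotvC s); ring.
Qed.

Lemma moment4_cyclic p q r s : moment4 p q r s = moment4 s p q r.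
Proof. by apply: eq_bigr => i _; ring. Qed.

Lemma moment2_dot_functional p : dot_functional (moment2 p).
Proof.
exists (\sum_(i < k) (E i * dotv (As i) p) *: As i) => s.
by rewrite dotv_sumr; apply: eq_bigr => i _; rewrite dotvZr (dotvC s); ring.
Qed.

Lemma moment2C p s : moment2 p s = moment2 s p.
Proof. by apply: eq_bigr => i _; rewrite (mulrC (dotv _ p)). Qed.

Lemma moment4_evec a b c f : moment4 (e a) (e b) (e c) (e f) =
  \sum_(i < k) E i * (As i 0 a * As i 0 b * As i 0 c * As i 0 f).
Proof. by apply: eq_bigr => i _; rewrite !(dotvC (As i)) !dotv_evecl. Qed.

Lemma moment2_evec a b : moment2 (e a) (e b) = \sum_(i < k) E i * (As i 0 a * As i 0 b).
Proof. by apply: eq_bigr => i _; rewrite !(dotvC (As i)) !dotv_evecl. Qed.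

End Moments.
End Contraction.

Section Expectation.
Variables (R : realType) (dO : measure_display) (Omega : measurableType dO).
Variable P : probability Omega R.

Lemma fin_num_integrable (f : Omega -> \bar R) : measurable_fun setT f ->
  (\int[P]_w f w)%E \is a fin_num -> P.-integrable setT f.
Proof.
move=> mf fin_f; apply/integrableP; split => //.
rewrite (_ : (fun x => `|f x|%E) = (fun x => f^\+ x + f^\- x)%E); last exact: fune_abse.
rewrite ge0_integralD //; last 2 first.
- exact: measurable_funepos.
- exact: measurable_funeneg.
move: fin_f; rewrite [X in X \is a fin_num]integralE.
have : (0 <= \int[P]_(x in setT) f^\+ x)%E by apply: integral_ge0.
have : (0 <= \int[P]_(x in setT) f^\- x)%E by apply: integral_ge0.
move: (\int[P]_(x in setT) f^\+ x)%E (\int[P]_(x in setT) f^\- x)%E.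
by move=> [a| |] [b| |] //=; rewrite ?ltry.
Qed.

Definition has_expectation (F : Omega -> R) (r : R) :=
  measurable_fun setT F /\ (\int[P]_w (F w)%:E)%E = r%:E.

Lemma has_expectation_integrable F r :
  has_expectation F r -> P.-integrable setT (EFin \o F).
Proof.
case=> mF EF; apply: fin_num_integrable; first exact/measurable_EFinP.
by rewrite EF.
Qed.

Lemma has_expectation_Ex F r : has_expectation F r -> Ex P F = r.
Proof. by case=> _ EF; rewrite /Ex EF. Qed.

Lemma has_expectationZ (a : R) F r :
  has_expectation F r -> has_expectation (fun w => a * F w) (a * r).
Proof.
move=> FE; have [mF EF] := FE; split; first exact: measurable_funM.
under eq_integral do rewrite EFinM.
by rewrite integralZl ?EF //; exact: has_expectation_integrable FE.
Qed.

Lemma has_expectation_sum (n : nat) (F : 'I_n -> Omega -> R) (r : 'I_n -> R) :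
  (forall j, has_expectation (F j) (r j)) ->
  has_expectation (fun w => \sum_(j < n) F j w) (\sum_(j < n) r j).
Proof.
move=> FE; split; first by apply: measurable_sum => j; case: (FE j).
under eq_integral do rewrite -sumEFin.
rewrite integral_sum //; last by move=> j; exact: has_expectation_integrable (FE j).
by rewrite -sumEFin; apply: eq_bigr => j _; case: (FE j).
Qed.

Lemma has_expectation_contract4 (d : nat) (u v : 'rV[R]_d)
    (F : 'I_d -> 'I_d -> 'I_d -> 'I_d -> Omega -> R) r :
  (forall a b c f, has_expectation (F a b c f) (r a b c f)) ->
  has_expectation (fun w => contract4 u v (fun a b c f => F a b c f w)) (contract4 u v r).
Proof.
move=> FE; apply: has_expectation_sum => a; apply: has_expectationZ.
apply: has_expectation_sum => b; apply: has_expectationZ.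
apply: has_expectation_sum => c; apply: has_expectationZ.
by apply: has_expectation_sum => f; apply: has_expectationZ.
Qed.

Lemma has_expectation_contract2 (d : nat) (u : 'rV[R]_d) (F : 'I_d -> 'I_d -> Omega -> R) r :
  (forall a b, has_expectation (F a b) (r a b)) ->
  has_expectation (fun w => contract2 u (fun a b => F a b w)) (contract2 u r).
Proof.
move=> FE; apply: has_expectation_sum => a; apply: has_expectationZ.
by apply: has_expectation_sum => b; apply: has_expectationZ.
Qed.

End Expectation.

Section Measurability.
Variables (R : realType) (dO : measure_display) (Omega : measurableType dO).
Variables (d : nat) (X : Omega -> 'rV[R]_d).
Hypothesis mX : forall j : 'I_d, measurable_fun setT (fun w => X w ord0 j).

Lemma measurable_dotv p : measurable_fun setT (fun w => dotv p (X w)).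
Proof. by apply: measurable_sum => j; apply: measurable_funM. Qed.

Lemma measurable_moe_y (k : nat) (Zc : Omega -> 'I_k) (xi : Omega -> R)
    (astar : 'I_k -> 'rV[R]_d) (g : R -> R) :
  (forall i, measurable (Zc @^-1` [set i])) -> measurable_fun setT xi ->
  measurable_fun setT g -> measurable_fun setT (moe_y X Zc xi astar g).
Proof.
move=> mZc mxi mg; apply: measurable_funD => //; apply: measurable_sum => i.
apply: measurable_funM; last exact: measurableT_comp mg (measurable_dotv _).
rewrite (_ : (fun w => _) = \1_(Zc @^-1` [set i])); first exact: measurable_indic.
apply/funext => w; rewrite /indic; case: (eqVneq (Zc w) i) => [<-|/eqP Zc_neq].
  by rewrite mem_set.
by rewrite memNset.
Qed.

Ltac measurable_poly := repeat first
  [ exact: measurable_cst | exact: measurable_dotv | exact: measurable_funX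
  | apply: measurable_funD | apply: measurable_funN | apply: measurable_funM ].

Lemma measurable_Q4 (a b c : R) (f : Omega -> R) : measurable_fun setT f ->
  measurable_fun setT (fun w => Q4 a b c (f w)).
Proof. by move=> mf; rewrite /Q4; measurable_poly. Qed.

Lemma measurable_Q2 (a : R) (f : Omega -> R) : measurable_fun setT f ->
  measurable_fun setT (fun w => Q2 a (f w)).
Proof. by move=> mf; rewrite /Q2; measurable_poly. Qed.

Lemma measurable_score_form4 p q r s :
  measurable_fun setT (fun w => score_form4 p q r s (X w)).
Proof. by rewrite /score_form4; measurable_poly. Qed.

Lemma measurable_score_form2 p q : measurable_fun setT (fun w => score_form2 p q (X w)).
Proof. by rewrite /score_form2; measurable_poly. Qed.

End Measurability.

Section Objective.
Variables (R : realType) (dO : measure_display) (Omega : measurableType dO).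
Variable P : probability Omega R.
Variables (k d : nat) (X : Omega -> 'rV[R]_d) (Zc : Omega -> 'I_k) (xi : Omega -> R).
Variables (astar wstar : 'I_k -> 'rV[R]_d) (g : R -> R).
Variables (alpha beta gamma delta' c c' : R).
Hypothesis mX : forall j : 'I_d, measurable_fun setT (fun w => X w ord0 j).
Hypothesis mZc : forall i : 'I_k, measurable (Zc @^-1` [set i]).
Hypothesis mxi : measurable_fun setT xi.
Hypothesis mg : measurable_fun setT g.

Let y := moe_y X Zc xi astar g.
Let Ep m := Ex P (fun w => softmax wstar m (X w)).
Local Notation e := (evec R).

Let my : measurable_fun setT y.
Proof. exact: measurable_moe_y. Qed.

Section FourthOrder.
Hypothesis c_neq0 : c != 0.
Hypothesis c_def : forall j1 j2 j3 j4 : 'I_d,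
  (\int[P]_w (Q4 alpha beta gamma (y w) * score [:: j1; j2; j3; j4] (X w))%:E)%E
  = (c * \sum_(i < k) Ep i * (astar i 0 j1 * astar i 0 j2 * astar i 0 j3 * astar i 0 j4))%:E.

Lemma Ex_Q4_t1 u v :
  Ex P (fun w => Q4 alpha beta gamma (y w) * t1 c u v (X w)) = moment4 Ep astar u v v u.
Proof.
have QS_E i1 i2 i3 i4 : has_expectation P
    (fun w => Q4 alpha beta gamma (y w) * score_form4 (e i1) (e i2) (e i3) (e i4) (X w))
    (c * moment4 Ep astar (e i1) (e i2) (e i3) (e i4)).
  split; last by rewrite moment4_evec -c_def; apply: eq_integral => w _; rewrite score4E.
  exact: measurable_funM (measurable_Q4 _ _ _ my) (measurable_score_form4 _ _ _ _ _).
have := has_expectationZ c^-1 (has_expectation_contract4 u v QS_E).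
rewrite -contract4_mull mulKf // contract4_evec; last 2 first.
- exact: moment4_dot_functional.
- exact: moment4_cyclic.
move/has_expectation_Ex <-; congr Ex; apply/funext => w.
rewrite t1_score_form4 -(contract4_evec u v (F := fun p q r s => score_form4 p q r s (X w))).
- by rewrite mulrCA; congr (_ * _); exact: contract4_mull.
- by move=> p q r; exact: score_form4_dot_functional.
- by move=> p q r s; exact: score_form4_cyclic.
Qed.

Lemma Ex_Q4_t2 u :
  Ex P (fun w => Q4 alpha beta gamma (y w) * t2 c u (X w)) = moment4 Ep astar u u u u.
Proof. by rewrite -Ex_Q4_t1; congr Ex; apply/funext => w; rewrite t2_t1. Qed.

End FourthOrder.

Hypothesis c'_neq0 : c' != 0.
Hypothesis c'_def : forall j1 j2 : 'I_d,
  (\int[P]_w (Q2 delta' (y w) * score [:: j1; j2] (X w))%:E)%E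
  = (c' * \sum_(i < k) Ep i * (astar i 0 j1 * astar i 0 j2))%:E.

Lemma Ex_Q2_t3 u :
  Ex P (fun w => Q2 delta' (y w) * t3 c' u (X w)) = moment2 Ep astar u u.
Proof.
have QS_E i1 i2 : has_expectation P
    (fun w => Q2 delta' (y w) * score_form2 (e i1) (e i2) (X w))
    (c' * moment2 Ep astar (e i1) (e i2)).
  split; last by rewrite moment2_evec -c'_def; apply: eq_integral => w _; rewrite score2E.
  exact: measurable_funM (measurable_Q2 _ my) (measurable_score_form2 _ _ _).
have := has_expectationZ c'^-1 (has_expectation_contract2 u QS_E).
rewrite -contract2_mull mulKf // contract2_evec; last 2 first.
- exact: moment2_dot_functional.
- exact: moment2C.
move/has_expectation_Ex <-; congr Ex; apply/funext => w.
rewrite t3_score_form2 -(contract2_evec u (F := fun p s => score_form2 p s (X w))).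
- by rewrite mulrCA; congr (_ * _); exact: contract2_mull.
- by move=> p; exact: score_form2_dot_functional.
- by move=> p s; exact: score_form2C.
Qed.

End Objective.

Unset Implicit Arguments.

Theorem theorem5 (R : realType) (k d : nat)
  (astar wstar : 'I_k -> 'rV[R]_d) (Rw : R) (g : R -> R) (sigma : R)
  (dO : measure_display) (Omega : measurableType dO) (P : probability Omega R)
  (X : Omega -> 'rV[R]_d) (Zc : Omega -> 'I_k) (xi : Omega -> R)
  (alpha beta gamma delta' c c' mu lambda delta : R) (A : 'M[R]_(k, d)) :
  (2 <= k)%N -> 0 < sigma ->
  (* (A1) + the data model *)
  moe_model P X Zc xi wstar sigma ->
  (* (A2) *)
  (forall i, sqnorm (astar i) = 1) ->
  (forall i, Num.sqrt (sqnorm (wstar i)) <= Rw) ->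
  (forall i : 'I_k, val i = k.-1 -> wstar i = 0) ->
  (* (A3) *)
  row_free (\matrix_(i < k) astar i) ->
  (forall i j, dotv (wstar i) (astar j) = 0) ->
  (2 * k - 1 < d)%N ->
  (* (A4), with the tuple used by Q4, Q2 *)
  measurable_fun setT g ->
  valid_with g sigma alpha beta gamma delta' ->
  (* the constants c_{g,sigma}, c'_{g,sigma} *)
  c != 0 -> c' != 0 ->
  (forall j1 j2 j3 j4 : 'I_d,
     (\int[P]_w (Q4 alpha beta gamma (moe_y X Zc xi astar g w)
                 * score [:: j1; j2; j3; j4] (X w))%:E)%E
     = (c * \sum_(i < k) Ex P (fun w => softmax wstar i (X w))
            * (astar i 0 j1 * astar i 0 j2 * astar i 0 j3 * astar i 0 j4))%:E) ->
  (forall j1 j2 : 'I_d,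
     (\int[P]_w (Q2 delta' (moe_y X Zc xi astar g w)
                 * score [:: j1; j2] (X w))%:E)%E
     = (c' * \sum_(i < k) Ex P (fun w => softmax wstar i (X w))
             * (astar i 0 j1 * astar i 0 j2))%:E) ->
  0 < mu -> 0 < lambda -> 0 < delta ->
  let Ep m := Ex P (fun w => softmax wstar m (X w)) in
  let ai i := row i A in
  L4 P X Zc xi astar g alpha beta gamma delta' c c' mu lambda delta A
  = \sum_(m < k) Ep m * \sum_(i < k) \sum_(j < k | j != i)
        (dotv (astar m) (ai i) ^+ 2 * dotv (astar m) (ai j) ^+ 2)
    - mu * \sum_(m < k) \sum_(i < k) Ep m * dotv (astar m) (ai i) ^+ 4
    + lambda * \sum_(i < k) (\sum_(m < k) Ep m * dotv (astar m) (ai i) ^+ 2 - 1) ^+ 2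
    + delta / 2 * frob2 A.
Proof.
move=> _ _ [mX mZc mxi _ _] _ _ _ _ _ _ mg _ c_neq0 c'_neq0 c_def c'_def _ _ _ Ep ai.
have t1E := Ex_Q4_t1 mX mZc mxi mg c_neq0 c_def.
have t2E := Ex_Q4_t2 mX mZc mxi mg c_neq0 c_def.
have t3E := Ex_Q2_t3 mX mZc mxi mg c'_neq0 c'_def.
rewrite /L4.
under eq_bigr do under eq_bigr do rewrite t1E.
under [X in _ - mu * X]eq_bigr do rewrite t2E.
under [X in lambda * X]eq_bigr do rewrite t3E.
rewrite /moment4 /moment2 /Ep /ai; congr (_ - _ * _ + _ * _ + _).
- under eq_bigr => i _ do rewrite exchange_big.
  rewrite exchange_big; apply: eq_bigr => m _ /=; rewrite mulr_sumr.
  apply: eq_bigr => i _; rewrite mulr_sumr; apply: eq_bigr => j _; ring.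
- rewrite exchange_big; apply: eq_bigr => m _; apply: eq_bigr => i _; ring.
Qed.
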